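(* Let $\Theta$ be the class of all connected graphs $G$ with $\mathrm{ldim}_f(G)=\frac{|V(G)|}{2}$. If $G_1,G_2\in\Theta$, then the join $G_1+G_2$ belongs to $\Theta$.
   Context: All graphs are finite, simple and connected; $d(x,y)$ is the shortest-path distance. For an edge $uv$, $L(uv)=\{x\in V(G): d(u,x)\neq d(v,x)\}$. A function $f:V(G)\to[0,1]$ is a local resolving function of $G$ if $\sum_{x\in L(uv)}f(x)\geq 1$ for every edge $uv$; $\mathrm{ldim}_f(G)$ is the minimum of $\sum_{v\in V(G)}f(v)$ over all local resolving functions. The join $G_1+G_2$ is the disjoint union of $G_1$ and $G_2$ together with all edges joining a vertex of $G_1$ to a vertex of $G_2$. *)

From HB Require Import structures.
From mathcomp Require Import all_boot all_order all_algebra.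
Set Implicit Arguments. Unset Strict Implicit. Unset Printing Implicit Defensive.
Import Order.TTheory GRing.Theory Num.Theory.

Definition simple_graph (T : finType) (e : rel T) : Prop :=
  symmetric e /\ irreflexive e.

Definition connected_graph (T : finType) (e : rel T) : Prop :=
  forall x y : T, connect e x y.

Fixpoint ball (T : finType) (e : rel T) (n : nat) (x : T) : {set T} :=
  match n with
  | 0 => [set x]
  | n'.+1 => ball e n' x :|: [set y | [exists z in ball e n' x, e z y]]
  end.

(* shortest-path distance d(x,y): the number of radii n < #|T| for which y is
   not yet in the ball of radius n around x, i.e. the least n with
   y \in ball e n x (for a connected graph, such n <= #|T| - 1 exists). *)
Definition dist (T : finType) (e : rel T) (x y : T) : nat :=
  \sum_(n < #|T|) (y \notin ball e n x).

Definition Lset (T : finType) (e : rel T) (u v : T) : {set T} :=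
  [set x | dist e u x != dist e v x].

Local Open Scope ring_scope.

Definition local_resolving (R : realFieldType) (T : finType) (e : rel T)
  (f : T -> R) : Prop :=
  (forall x, 0 <= f x <= 1) /\
  (forall u v, e u v -> 1 <= \sum_(x in Lset e u v) f x).

Definition is_ldimf (R : realFieldType) (T : finType) (e : rel T) (r : R) : Prop :=
  (exists f : T -> R, local_resolving e f /\ \sum_(x : T) f x = r) /\
  (forall f : T -> R, local_resolving e f -> r <= \sum_(x : T) f x).

Definition in_Theta (R : realFieldType) (T : finType) (e : rel T) : Prop :=
  connected_graph e /\ is_ldimf (R := R) e (#|T|%:R / 2%:R).

Definition join_rel (T1 T2 : finType) (e1 : rel T1) (e2 : rel T2) : rel (T1 + T2) :=
  fun a b =>
    match a, b with
    | inl x, inl y => e1 x y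
    | inr x, inr y => e2 x y
    | _, _ => true
    end.

From HB Require Import structures.
From mathcomp Require Import all_boot all_order all_algebra.
From mathcomp Require Import lra.
Set Implicit Arguments. Unset Strict Implicit. Unset Printing Implicit Defensive.
Import Order.TTheory GRing.Theory Num.Theory.

(* A graph lies in Theta exactly when every vertex has a true twin, i.e. a
   distinct vertex with the same closed neighbourhood [ball e 1].  For an edge
   uv one has L(uv) = {u, v} precisely when u and v are true twins.  Hence the
   constant 1/2 is always locally resolving, and twins u, v force
   f u + f v >= 1, which (pairing every vertex with a twin) gives the lower
   bound |V|/2.  Conversely, if v has no twin then every edge at v is also
   resolved by a third vertex, so f = 0 at v and 1/2 elsewhere is locally
   resolving with total (|V| - 1)/2.  True twins of G1 or G2 stay true twins
   in G1 + G2, which is connected. *)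

Definition true_twins (T : finType) (e : rel T) (u v : T) : bool :=
  (u != v) && (ball e 1 u == ball e 1 v).

Definition twinned (T : finType) (e : rel T) : Prop :=
  forall v, exists u, true_twins e u v.

Lemma connect_homo (T T' : finType) (e : rel T) (e' : rel T') (h : T -> T') x y :
  {homo h : u v / e u v >-> e' u v} -> connect e x y -> connect e' (h x) (h y).
Proof.
move=> he /connectP [p + ->]; elim: p x => [|z p IHp] x /=.
  by rewrite connect0.
by case/andP=> /he exz /IHp; apply: connect_trans (connect1 exz).
Qed.

Section Distance.
Variables (T : finType) (e : rel T).

Lemma ball0 x : ball e 0 x = [set x]. Proof. by []. Qed.

Lemma ballS n x :
  ball e n.+1 x = ball e n x :|: [set y | [exists z in ball e n x, e z y]].
Proof. by []. Qed.

Local Arguments ball : simpl never.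

Lemma ball_id n x : x \in ball e n x.
Proof. by elim: n => [|n IHn]; rewrite ?ball0 ?ballS inE ?IHn. Qed.

Lemma sub_ball m n x : (m <= n)%N -> ball e m x \subset ball e n x.
Proof.
elim: n => [|n IHn]; first by rewrite leqn0 => /eqP ->.
rewrite leq_eqVlt ltnS => /predU1P [-> // | /IHn mn].
by rewrite ballS (subset_trans mn) ?subsetUl.
Qed.

Lemma in_ball1 x y : (y \in ball e 1 x) = (y == x) || e x y.
Proof.
rewrite ballS ball0 !inE; congr (_ || _).
by apply/exists_inP/idP => [[z /set1P -> //]|exy]; exists x; rewrite ?inE.
Qed.

Lemma dist_leE n x y : (n < #|T|)%N -> (dist e x y <= n)%N = (y \in ball e n x).
Proof.
move=> ltnT; rewrite /dist.
rewrite -(big_mkord xpredT (fun k => nat_of_bool (y \notin ball e k x))).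
rewrite (big_cat_nat (leq0n n) (ltnW ltnT)) /=.
case: (boolP (y \in ball e n x)) => yn.
  rewrite [X in (_ + X)%N]big1_seq ?addn0; last first.
    move=> k /andP [_]; rewrite mem_index_iota => /andP [nk _].
    by rewrite (subsetP (sub_ball _ nk)).
  apply/idP; apply: leq_trans (leq_sum _ (E2 := fun=> 1%N) (fun k _ => leq_b1 _)) _.
  by rewrite sum_nat_const_nat subn0 muln1.
apply/negbTE; rewrite -ltnNge [X in (_ + X)%N]big_ltn // yn.
rewrite (eq_big_nat _ _ (F2 := fun _ => 1%N)) => [|k /andP [_ kn]].
  by rewrite sum_nat_const_nat subn0 muln1 addnS ltnS leq_addr.
by apply/eqP; rewrite eqb1; apply: contra yn; apply/subsetP/sub_ball/ltnW.
Qed.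

Lemma dist_eq0 x y : (dist e x y == 0)%N = (y == x).
Proof. by rewrite -leqn0 dist_leE ?ball0 ?inE //; apply/card_gt0P; exists x. Qed.

Lemma dist_xx x : dist e x x = 0%N.
Proof. by apply/eqP; rewrite dist_eq0. Qed.

Lemma dist_le1 x y : (1 < #|T|)%N -> (dist e x y <= 1)%N = (y == x) || e x y.
Proof. by move=> T_gt1; rewrite dist_leE ?in_ball1. Qed.

Lemma ball_twins u v n :
  ball e 1 u = ball e 1 v -> (0 < n)%N -> ball e n u = ball e n v.
Proof.
by move=> uvE; elim: n => [//|[//|n] IHn _]; rewrite ballS IHn.
Qed.

Lemma dist_twins u v x : ball e 1 u = ball e 1 v -> x != u -> x != v ->
  dist e u x = dist e v x.
Proof.
move=> uv xu xv; apply: eq_bigr => -[[|n] _] _ /=.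
  by rewrite !ball0 !inE xu xv.
by rewrite (ball_twins uv).
Qed.

Lemma Lset_sym u v : Lset e u v = Lset e v u.
Proof. by apply/setP => x; rewrite !inE eq_sym. Qed.

Lemma Lset_ends u v : u != v -> (u \in Lset e u v) && (v \in Lset e u v).
Proof.
by move=> uv; rewrite !inE !dist_xx [0%N == _]eq_sym !dist_eq0 uv eq_sym.
Qed.

Lemma twins_adj u v : true_twins e u v -> e u v.
Proof.
case/andP=> uv /eqP uvE; have := ball_id 1 v; rewrite -uvE in_ball1.
by rewrite eq_sym (negbTE uv).
Qed.

Lemma Lset_twins a b : ball e 1 a = ball e 1 b -> Lset e a b \subset [set a; b].
Proof.
move=> abE; apply/subsetP => x; rewrite !inE; apply: contraR.
by rewrite negb_or => /andP [xa xb]; rewrite (dist_twins abE xa xb) eqxx.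
Qed.

Lemma twins_Lset a b : symmetric e -> e a b ->
  Lset e a b \subset [set a; b] -> ball e 1 a = ball e 1 b.
Proof.
move=> sym_e eab Lab; have [<- //|ab] := eqVneq a b.
have T_gt1 : (1 < #|T|)%N.
  by rewrite (cardD1 a) inE ltnS; apply/card_gt0P; exists b; rewrite !inE eq_sym ab.
apply/setP => x; rewrite !in_ball1.
case: (eqVneq x a) => [->|xa]; first by rewrite sym_e eab orbT.
case: (eqVneq x b) => [->|xb]; first by rewrite eab.
have := dist_le1 a x T_gt1; have := dist_le1 b x T_gt1.
rewrite (negbTE xa) (negbTE xb) /= => <- <-; congr (_ <= 1)%N; apply/eqP.
have := contra (subsetP Lab x); rewrite !inE negbK (negbTE xa) (negbTE xb); exact.
Qed.

End Distance.

Local Open Scope ring_scope.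

Section Sums.
Variables (R : realFieldType) (T : finType).

Lemma ler_sum_subset (f : T -> R) (A B : {set T}) :
  {in B, forall x, 0 <= f x} -> A \subset B ->
  \sum_(x in A) f x <= \sum_(x in B) f x.
Proof.
move=> f_ge0 AB; rewrite (big_setID (A := B) A) /= (setIidPr AB) lerDl.
by apply: sumr_ge0 => x; rewrite inE => /andP [_ /f_ge0].
Qed.

Lemma ler_pair_sum (f : T -> R) (A : {set T}) a b :
  (forall x, 0 <= f x) -> a \in A -> b \in A -> a != b ->
  f a + f b <= \sum_(x in A) f x.
Proof.
move=> f_ge0 aA bA ab.
have -> : f a + f b = \sum_(x in [set a; b]) f x by rewrite big_setU1 ?big_set1 ?inE.
apply: ler_sum_subset => [x _ //|].
by apply/subsetP => x; rewrite !inE => /orP [] /eqP ->.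
Qed.

Lemma sumr_ge0_twinned (K : eqType) (k : T -> K) (g : T -> R) :
  (forall x, exists y, (y != x) && (k y == k x)) ->
  (forall x y, (x != y) && (k x == k y) -> 0 <= g x + g y) ->
  0 <= \sum_x g x.
Proof.
move=> twin g_pair.
pose t x := odflt x [pick y | (y != x) && (k y == k x)].
have tP x : (t x != x) && (k (t x) == k x).
  rewrite /t; case: pickP => [y //|none].
  by have [y] := twin x; rewrite none.
(* A twin t x of each x with g x < 0 has g (t x) >= - g x > 0, and two such x
   cannot share a twin, so the negative part is paid for by distinct terms. *)
pose N := [set x | g x < 0].
have injt : {in N &, injective t}.
  move=> a b; rewrite !inE => ga gb tab; apply/eqP; apply: contraT => ab.
  have /andP [_ /eqP kta] := tP a; have /andP [_ /eqP ktb] := tP b.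
  have twin_ab : (a != b) && (k a == k b) by rewrite ab -kta tab ktb eqxx.
  by have := g_pair a b twin_ab; lra.
have tN : t @: N \subset ~: N.
  apply/subsetP => _ /imsetP [x xN ->]; rewrite !inE -leNgt.
  by rewrite inE in xN; have := g_pair _ _ (tP x); lra.
have sum_tN : \sum_(x in N) g (t x) <= \sum_(x in ~: N) g x.
  rewrite -big_imset //; apply: ler_sum_subset tN => x.
  by rewrite !inE -leNgt.
have sum_pairs : 0 <= \sum_(x in N) (g (t x) + g x).
  by apply: sumr_ge0 => x _; apply: g_pair.
rewrite big_split /= in sum_pairs.
rewrite (bigID (mem N)) /= [X in _ + X](eq_bigl (fun x => x \in ~: N)) => [|x].
  lra.
by rewrite in_setC.
Qed.

End Sums.

Section LocalResolving.
Variables (R : realFieldType) (T : finType) (e : rel T).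
Implicit Type f : T -> R.

Lemma local_resolving_half : irreflexive e -> local_resolving e (fun=> 2^-1 : R).
Proof.
move=> irr_e; split=> [x|u v euv]; first by apply/andP; split; lra.
have uv : u != v by apply: contraTneq euv => ->; rewrite irr_e.
have /andP [uL vL] := Lset_ends e uv.
have half_ge0 : 0 <= 2^-1 :> R by rewrite invr_ge0.
by have := ler_pair_sum (fun=> half_ge0) uL vL uv; lra.
Qed.

Lemma local_resolving_twins f u v :
  local_resolving e f -> true_twins e u v -> 1 <= f u + f v.
Proof.
case=> f01 fL twin_uv; have euv := twins_adj twin_uv.
case/andP: twin_uv => uv /eqP uvE.
apply: le_trans (fL _ _ euv) _.
have -> : f u + f v = \sum_(x in [set u; v]) f x by rewrite big_setU1 ?big_set1 ?inE.
apply: ler_sum_subset => [x _|]; first by case/andP: (f01 x).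
exact: Lset_twins.
Qed.

Lemma half_card_le_resolving f :
  twinned e -> local_resolving e f -> #|T|%:R / 2%:R <= \sum_x f x.
Proof.
move=> twin_e resf; rewrite -subr_ge0.
have <- : \sum_x (f x - 2^-1) = \sum_x f x - #|T|%:R / 2%:R.
  by rewrite sumrB sumr_const -[_ *+ _]mulr_natr mulrC.
apply: (@sumr_ge0_twinned _ _ _ (ball e 1)) => [x|x y twin_xy].
  by have [y] := twin_e x; exists y.
by have := local_resolving_twins resf twin_xy; lra.
Qed.

Lemma is_ldimf_half : irreflexive e -> twinned e -> is_ldimf e (#|T|%:R / 2%:R : R).
Proof.
move=> irr_e twin_e; split=> [|f resf]; last exact: half_card_le_resolving.
exists (fun=> 2^-1); split; first exact: local_resolving_half.
by rewrite sumr_const -[_ *+ _]mulr_natr mulrC.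
Qed.

Lemma local_resolving_twinless f v :
  simple_graph e -> (forall u, ~~ true_twins e u v) ->
  (forall x, 0 <= f x <= 1) -> (forall x, x != v -> f x = 2^-1) ->
  local_resolving e f.
Proof.
move=> [sym_e irr_e] no_twin f01 f_half; split=> // a b.
have f_ge0 x : 0 <= f x by case/andP: (f01 x).
wlog av : a b / a != v => [wlog_av eab | eab].
  have [avE|av] := eqVneq a v; last exact: wlog_av.
  rewrite Lset_sym; apply: wlog_av; last by rewrite sym_e.
  by apply: contraTneq eab => ->; rewrite avE irr_e.
have ab : a != b by apply: contraTneq eab => ->; rewrite irr_e.
have /andP [aL bL] := Lset_ends e ab.
have [bv|bv] := eqVneq b v; last first.
  by have := ler_pair_sum f_ge0 aL bL ab; rewrite (f_half _ av) (f_half _ bv); lra.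
subst b; have /subsetPn [w wL] : ~~ (Lset e a v \subset [set a; v]).
  apply: contra (no_twin a) => /(twins_Lset sym_e eab) avE.
  by rewrite /true_twins av avE eqxx.
rewrite !inE negb_or => /andP [wa wv].
have aw : a != w by rewrite eq_sym.
have := ler_pair_sum f_ge0 aL wL aw.
by rewrite (f_half _ av) (f_half _ wv); lra.
Qed.

Lemma twinned_of_ldimf_half :
  simple_graph e -> is_ldimf e (#|T|%:R / 2%:R : R) -> twinned e.
Proof.
move=> sg_e [_ ldim_le] v.
have [/existsP //|/existsPn no_twin] := boolP [exists u, true_twins e u v].
pose f x : R := if x == v then 0 else 2^-1.
have resf : local_resolving e f.
  apply: local_resolving_twinless sg_e no_twin _ _ => [x|x /negbTE]; rewrite /f.
    by case: eqP => _; apply/andP; split; lra.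
  by move->.
exfalso; have := ldim_le f resf.
rewrite (bigD1 v) //= {1}/f eqxx add0r.
rewrite (eq_bigr (fun=> 2^-1)) => [|x /negbTE]; last by rewrite /f => ->.
rewrite sumr_const cardC1 -[_ *+ _]mulr_natr.
have : (0 < #|T|)%N by apply/card_gt0P; exists v.
by case: #|T| => // n _; rewrite -natr1 /=; lra.
Qed.

Lemma in_ThetaP : simple_graph e ->
  in_Theta R e <-> connected_graph e /\ twinned e.
Proof.
move=> sg_e; split=> [[conn ldim]|[conn twin]]; split=> //.
  exact: twinned_of_ldimf_half.
exact: is_ldimf_half sg_e.2 twin.
Qed.

End LocalResolving.

Section Join.
Variables (T1 T2 : finType) (e1 : rel T1) (e2 : rel T2).
Local Notation J := (join_rel e1 e2).

Lemma join_simple : simple_graph e1 -> simple_graph e2 -> simple_graph J.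
Proof.
move=> [sym1 irr1] [sym2 irr2]; split; last by case=> x /=.
by case=> x [] y //=.
Qed.

Lemma join_connected :
  connected_graph e1 -> connected_graph e2 -> connected_graph J.
Proof.
move=> conn1 conn2 [x|x] [y|y].
- exact: (connect_homo (h := inl) (e' := J)) (conn1 x y).
- exact: connect1.
- exact: connect1.
- exact: (connect_homo (h := inr) (e' := J)) (conn2 x y).
Qed.

Lemma join_ball1_inl x y : (inl y \in ball J 1 (inl x)) = (y \in ball e1 1 x).
Proof. by rewrite !in_ball1. Qed.

Lemma join_ball1_inr x y : (inr y \in ball J 1 (inr x)) = (y \in ball e2 1 x).
Proof. by rewrite !in_ball1. Qed.

Lemma join_twins_inl u v : true_twins e1 u v -> true_twins J (inl u) (inl v).
Proof.
case/andP=> uv /eqP uvE; apply/andP; split=> //; apply/eqP/setP => -[y|y].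
  by rewrite !join_ball1_inl uvE.
by rewrite !in_ball1.
Qed.

Lemma join_twins_inr u v : true_twins e2 u v -> true_twins J (inr u) (inr v).
Proof.
case/andP=> uv /eqP uvE; apply/andP; split=> //; apply/eqP/setP => -[y|y].
  by rewrite !in_ball1.
by rewrite !join_ball1_inr uvE.
Qed.

Lemma join_twinned : twinned e1 -> twinned e2 -> twinned J.
Proof.
move=> twin1 twin2 [v|v].
  by have [u] := twin1 v; exists (inl u); apply: join_twins_inl.
by have [u] := twin2 v; exists (inr u); apply: join_twins_inr.
Qed.

End Join.

Theorem corollary2p4 (R : realFieldType) (T1 T2 : finType)
  (e1 : rel T1) (e2 : rel T2) :
  simple_graph e1 -> simple_graph e2 ->
  in_Theta R e1 -> in_Theta R e2 ->
  in_Theta R (join_rel e1 e2).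
Proof.
move=> sg1 sg2 /(in_ThetaP R sg1) [conn1 twin1] /(in_ThetaP R sg2) [conn2 twin2].
apply/(in_ThetaP R (join_simple sg1 sg2)); split.
  exact: join_connected.
exact: join_twinned.
Qed.
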